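(* Let $q_1,\dots,q_8$ be the eight points $(\pm1,\pm1,\pm1)$ of $\mathbb{R}^3$, let $t\in(0,1)$ and $q_{j+8}=tq_j$ ($j=1,\dots,8$). Place nonzero mass $\mu_1$ at each vertex $q_1,\dots,q_8$ of the outer cube and nonzero mass $\mu_2$ at each vertex $q_9,\dots,q_{16}$ of the inner cube. There exists $\delta\in(0,1)$ such that: if $t\in(0,\delta)$ and the configuration is central, then $\mu_1$ and $\mu_2$ have the same sign; if $t\in(\delta,1)$ and the configuration is central, then $\mu_1$ and $\mu_2$ have opposite signs.
   Context: A configuration $q=(q_1,\dots,q_N)$ of distinct points in $\mathbb{R}^3$ with masses $m_1,\dots,m_N$ is a central configuration if there exists $c\in\mathbb{R}$ such that $\sum_{j\neq i} m_j\left(\frac{1}{|q_j-q_i|^3}-c\right)(q_j-q_i)=0$ for all $i=1,\dots,N$. *)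

From Stdlib Require Import Reals List Arith.
Open Scope R_scope.

Definition pt : Type := (R * R * R)%type.
Definition px (p : pt) : R := fst (fst p).
Definition py (p : pt) : R := snd (fst p).
Definition pz (p : pt) : R := snd p.

Definition dist3 (p q : pt) : R :=
  sqrt ((px p - px q) ^ 2 + (py p - py q) ^ 2 + (pz p - pz q) ^ 2).

Definition sum_except (N i : nat) (f : nat -> R) : R :=
  fold_right Rplus 0 (map f (filter (fun j => negb (Nat.eqb j i)) (seq 0 N))).

Definition central_config (N : nat) (q : nat -> pt) (m : nat -> R) : Prop :=
  (forall i j, (i < N)%nat -> (j < N)%nat -> i <> j -> q i <> q j) /\
  exists c : R, forall i, (i < N)%nat ->
    sum_except N i (fun j => m j * (/ (dist3 (q j) (q i)) ^ 3 - c) * (px (q j) - px (q i))) = 0 /\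
    sum_except N i (fun j => m j * (/ (dist3 (q j) (q i)) ^ 3 - c) * (py (q j) - py (q i))) = 0 /\
    sum_except N i (fun j => m j * (/ (dist3 (q j) (q i)) ^ 3 - c) * (pz (q j) - pz (q i))) = 0.

Definition sgnb (b : bool) : R := if b then 1 else -1.

Definition cube_vertex (k : nat) : pt :=
  (sgnb (Nat.testbit k 0), sgnb (Nat.testbit k 1), sgnb (Nat.testbit k 2)).

Definition scale (t : R) (p : pt) : pt := (t * px p, t * py p, t * pz p).

(* Indices 0..7: outer cube q_1..q_8; indices 8..15: inner cube q_{j+8} = t q_j. *)
Definition nested_cubes (t : R) (k : nat) : pt :=
  if (k <? 8)%nat then cube_vertex k else scale t (cube_vertex (k - 8)).

Definition nested_masses (mu1 mu2 : R) (k : nat) : R :=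
  if (k <? 8)%nat then mu1 else mu2.

(* Look at the outer vertex v = (-1,-1,-1) and the inner vertex t v.  The x-components of
   their equilibrium equations are linear in the multiplier c, and eliminating c leaves
   mu1 t^2 P(t) = mu2 (2a - G(t)), where a is a positive constant of the cube, P > 0 on
   (0,1), and G is strictly increasing with G(1/2) < 2a < G(3/4).  So mu1 and mu2 have the
   same sign below the root delta of G = 2a and opposite signs above it. *)

From Stdlib Require Import Reals Lra Psatz.
From Coquelicot Require Import Coquelicot.
Open Scope R_scope.

Lemma same_sign_of_balance (x y p r : R) :
  x <> 0 -> 0 < p -> 0 < r -> x * p = y * r -> (0 < x /\ 0 < y) \/ (x < 0 /\ y < 0).
Proof. intros Hx Hp Hr E. destruct (Rdichotomy _ _ Hx); [right | left]; split; nra. Qed.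

Lemma opposite_sign_of_balance (x y p r : R) :
  x <> 0 -> 0 < p -> r < 0 -> x * p = y * r -> (0 < x /\ y < 0) \/ (x < 0 /\ 0 < y).
Proof. intros Hx Hp Hr E. destruct (Rdichotomy _ _ Hx); [right | left]; split; nra. Qed.

Definition increasing_on_unit_interval (f : R -> R) : Prop :=
  forall x y, 0 < x -> x < y -> y < 1 -> f x < f y.

Lemma increasing_of_derive (f f' : R -> R) :
  (forall x, 0 < x < 1 -> is_derive f x (f' x)) -> (forall x, 0 < x < 1 -> 0 < f' x) ->
  increasing_on_unit_interval f.
Proof.
  intros Hd Hpos x y Hx Hxy Hy.
  apply (incr_function f 0 1 f'); simpl; try lra;
    intros z Hz0 Hz1; [apply Hd | apply Hpos]; simpl in *; lra.
Qed.

Lemma increasing_crossing (f : R -> R) (c x0 x1 : R) :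
  increasing_on_unit_interval f -> 0 < x0 < 1 -> 0 < x1 < 1 -> f x0 < c -> c < f x1 ->
  exists d, 0 < d < 1 /\
    (forall t, 0 < t < d -> f t < c) /\ (forall t, d < t < 1 -> c < f t).
Proof.
  intros Hf Hx0 Hx1 Hc0 Hc1.
  set (below := fun t => 0 < t < 1 /\ f t < c).
  destruct (completeness below) as [d [Hub Hlub]].
  - exists 1. intros t [Ht _]. lra.
  - exists x0. split; assumption.
  - assert (Hd0 : x0 <= d) by (apply Hub; split; assumption).
    assert (Hd1 : d <= x1).
    { apply Hlub. intros s [Hs Hfs]. destruct (Rlt_or_le x1 s) as [Hlt|]; [|lra].
      pose proof (Hf x1 s ltac:(lra) Hlt ltac:(lra)). lra. }
    exists d. split; [lra | split]; intros t Ht.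
    + destruct (Rlt_or_le (f t) c) as [|Hge]; [assumption | exfalso].
      assert (Ht_ub : is_upper_bound below t).
      { intros s [Hs Hfs]. destruct (Rlt_or_le t s) as [Hlt|]; [|lra].
        pose proof (Hf t s ltac:(lra) Hlt ltac:(lra)). lra. }
      pose proof (Hlub t Ht_ub). lra.
    + destruct (Rlt_or_le c (f t)) as [|Hle]; [assumption | exfalso].
      assert (Hmid : below ((d + t) / 2)).
      { split; [lra|]. pose proof (Hf ((d + t) / 2) t ltac:(lra) ltac:(lra) ltac:(lra)). lra. }
      pose proof (Hub _ Hmid). lra.
Qed.

Lemma inv_cube_le_of_sq (w m u : R) :
  0 < w -> 0 < m <= w * w -> 0 <= u -> 1 <= u^2 * m^3 -> / w^3 <= u.
Proof.
  intros Hw Hm Hu Hum.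
  assert (Hm3 : m^3 <= (w * w)^3) by (apply pow_incr; lra).
  assert (Hsq : 1 <= (u * w^3)^2).
  { replace ((u * w^3)^2) with (u^2 * (w * w)^3) by ring.
    apply (Rle_trans _ (u^2 * m^3)); [lra | apply Rmult_le_compat_l; nra]. }
  assert (0 <= u * w^3) by (apply Rmult_le_pos; [lra | apply pow_le; lra]).
  assert (Huw : 1 <= u * w^3) by nra.
  apply (Rmult_le_reg_l (w^3)); [apply pow_lt; lra|].
  rewrite Rinv_r by (apply pow_nonzero; lra). lra.
Qed.

Definition S2 : R := sqrt 2.
Definition S3 : R := sqrt 3.

(* Distances from the inner vertex t v to the outer vertices differing from v in one,
   resp. two, coordinates; the remaining outer vertices are at distance S3 (1 -+ t). *)
Definition d1 (t : R) : R := sqrt (3 - 2*t + 3*t^2).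
Definition d2 (t : R) : R := sqrt (3 + 2*t + 3*t^2).

(* Sum of |w - v|^-3 over the outer vertices w whose x-coordinate differs from that of v. *)
Definition a : R := / 2^3 + 2 * (/ (2*S2))^3 + (/ (2*S3))^3.
Definition K : R := / S3^3.

Definition P (t : R) : R :=
  t * (2*a + 4*K / (1 - t^2)^2 - 3 / d1 t^3 - 3 / d2 t^3) + (/ d1 t^3 - / d2 t^3).

Definition G (t : R) : R :=
  K * (t^3 / (1+t)^2 + t^3 / (1-t)^2) + t^3 * (3+t) / d2 t^3 + t^3 * (3-t) / d1 t^3.

Lemma S2_sq : S2 * S2 = 2.
Proof. apply sqrt_sqrt; lra. Qed.

Lemma S3_sq : S3 * S3 = 3.
Proof. apply sqrt_sqrt; lra. Qed.

Lemma d1_sq t : d1 t * d1 t = 3 - 2*t + 3*t^2.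
Proof. apply sqrt_sqrt; nra. Qed.

Lemma d2_sq t : d2 t * d2 t = 3 + 2*t + 3*t^2.
Proof. apply sqrt_sqrt; nra. Qed.

Lemma d1_pos t : 0 < d1 t.
Proof. apply sqrt_lt_R0; nra. Qed.

Lemma d2_pos t : 0 < d2 t.
Proof. apply sqrt_lt_R0; nra. Qed.

Lemma S2_bounds : 1.414 <= S2 <= 1.4143.
Proof. pose proof S2_sq; pose proof (sqrt_pos 2); fold S2 in *; split; nra. Qed.

Lemma S3_bounds : 1.732 <= S3 <= 1.7321.
Proof. pose proof S3_sq; pose proof (sqrt_pos 3); fold S3 in *; split; nra. Qed.

Lemma a_bounds : 0.23743 <= a <= 0.23746.
Proof.
  pose proof S2_bounds; pose proof S3_bounds; pose proof S2_sq; pose proof S3_sq.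
  assert (Ea : a = / 8 + / (8*S2) + / (24*S3)).
  { unfold a. field_simplify; [| lra | lra].
    replace (S2^3) with (2*S2) by (simpl; nra). replace (S3^3) with (3*S3) by (simpl; nra).
    field; lra. }
  assert (Hb : / (8*S2) * (8*S2) = 1) by (field; lra).
  assert (Hc : / (24*S3) * (24*S3) = 1) by (field; lra).
  assert (0 < / (8*S2)) by (apply Rinv_0_lt_compat; lra).
  assert (0 < / (24*S3)) by (apply Rinv_0_lt_compat; lra).
  rewrite Ea; split; nra.
Qed.

Lemma K_bounds : 0.19244 <= K <= 0.19246.
Proof.
  pose proof S3_bounds; pose proof S3_sq.
  assert (HK : K * (3*S3) = 1).
  { unfold K. replace (S3^3) with (3*S3) by (simpl; nra). field; lra. }
  assert (0 < K) by (unfold K; apply Rinv_0_lt_compat, pow_lt; lra).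
  split; nra.
Qed.

Ltac canonical_distances t :=
  pose proof S2_sq; pose proof S3_sq; pose proof (d1_sq t); pose proof (d2_sq t);
  pose proof S2_bounds; pose proof S3_bounds; pose proof (d1_pos t); pose proof (d2_pos t);
  repeat match goal with |- context [sqrt ?X] =>
    first [ rewrite (sqrt_lem_1 X 2) by nra
          | rewrite (sqrt_lem_1 X (2*S2)) by nra
          | rewrite (sqrt_lem_1 X (2*S3)) by nra
          | rewrite (sqrt_lem_1 X (S3*(1-t))) by nra
          | rewrite (sqrt_lem_1 X (S3*(1+t))) by nra
          | rewrite (sqrt_lem_1 X (d1 t)) by nra
          | rewrite (sqrt_lem_1 X (d2 t)) by nra
          | rewrite (sqrt_lem_1 X (2*t)) by nra
          | rewrite (sqrt_lem_1 X (2*t*S2)) by nra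
          | rewrite (sqrt_lem_1 X (2*t*S3)) by nra ]
  end.

(* The x-components of the equations at the points of index 0 and 8, i.e. at v and t v,
   are linear in c; t times the first minus the second eliminates c. *)
Lemma central_nested_cubes_balance t mu1 mu2 : 0 < t < 1 ->
  central_config 16 (nested_cubes t) (nested_masses mu1 mu2) ->
  mu1 * (t^2 * P t) = mu2 * (2*a - G t).
Proof.
  intros Ht [_ [c Hc]].
  destruct (Hc 0%nat ltac:(lia)) as [Hout _]. destruct (Hc 8%nat ltac:(lia)) as [Hin _].
  clear Hc. revert Hout Hin. unfold dist3.
  cbn [sum_except List.filter List.seq List.map List.fold_right Nat.eqb negb
       nested_cubes nested_masses cube_vertex scale sgnb px py pz fst snd
       Nat.ltb Nat.leb Nat.testbit Nat.odd Nat.even Nat.div2 Nat.sub].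
  canonical_distances t.
  intros Hout Hin.
  lazymatch type of Hout with ?L0 = 0 => lazymatch type of Hin with ?L8 = 0 =>
    assert (E : mu1 * (t^2 * P t) - mu2 * (2*a - G t) = t^2 * (t * L0 - L8)) end end.
  { unfold P, G, a, K. field. repeat split; nra. }
  rewrite Hout, Hin in E. lra.
Qed.

Lemma P_coeff_pos t : 0 < t < 1 ->
  0 < 2*a + 4*K / (1 - t^2)^2 - 3 / d1 t^3 - 3 / d2 t^3.
Proof.
  intros Ht.
  pose proof a_bounds; pose proof K_bounds; pose proof (d1_sq t); pose proof (d2_sq t).
  pose proof (d1_pos t); pose proof (d2_pos t).
  assert (HK : 4*K <= 4*K / (1 - t^2)^2).
  { assert (Hs : 0 < (1 - t^2)^2 <= 1).
    { assert (0 < 1 - t^2 <= 1) by nra. split; [apply pow_lt; lra | simpl; nra]. }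
    unfold Rdiv. rewrite <- (Rmult_1_r (4*K)) at 1. apply Rmult_le_compat_l; [lra|].
    rewrite <- Rinv_1. apply Rinv_le_contravar; lra. }
  unfold Rdiv.
  assert (Hd1 : / d1 t^3 <= 0.23005).
  { apply (inv_cube_le_of_sq _ (8/3)); try lra. pose proof (pow2_ge_0 (t - 1/3)); nra. }
  destruct (Rle_or_lt t (1/6)); [|destruct (Rle_or_lt t (1/3))].
  - assert (/ d1 t^3 <= 0.21941) by (apply (inv_cube_le_of_sq _ 2.75); nra).
    assert (/ d2 t^3 <= 0.19247) by (apply (inv_cube_le_of_sq _ 3); nra).
    lra.
  - assert (/ d2 t^3 <= 0.15846) by (apply (inv_cube_le_of_sq _ (41/12)); nra).
    lra.
  - assert (/ d2 t^3 <= 0.125) by (apply (inv_cube_le_of_sq _ 4); nra).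
    lra.
Qed.

Lemma P_pos t : 0 < t < 1 -> 0 < P t.
Proof.
  intros Ht. pose proof (P_coeff_pos t Ht).
  assert (Hd : d1 t <= d2 t).
  { pose proof (d1_pos t); pose proof (d2_pos t); pose proof (d1_sq t); pose proof (d2_sq t).
    nra. }
  assert (/ d2 t^3 <= / d1 t^3).
  { pose proof (d1_pos t).
    apply Rinv_le_contravar; [apply pow_lt | apply pow_incr]; lra. }
  assert (0 < t * (2*a + 4*K / (1 - t^2)^2 - 3 / d1 t^3 - 3 / d2 t^3))
    by (apply Rmult_lt_0_compat; lra).
  unfold P. lra.
Qed.

Lemma increasing_cube_over_sq_1pt : increasing_on_unit_interval (fun t => t^3 / (1+t)^2).
Proof.
  apply (increasing_of_derive _ (fun t => t^2 * (3+t) / (1+t)^3)); intros t Ht.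
  - auto_derive; [|field]; repeat split; apply Rgt_not_eq; nra.
  - apply Rdiv_lt_0_compat; [nra | apply pow_lt; lra].
Qed.

Lemma increasing_cube_over_sq_1mt : increasing_on_unit_interval (fun t => t^3 / (1-t)^2).
Proof.
  apply (increasing_of_derive _ (fun t => t^2 * (3-t) / (1-t)^3)); intros t Ht.
  - auto_derive; [|field]; repeat split; apply Rgt_not_eq; nra.
  - apply Rdiv_lt_0_compat; [nra | apply pow_lt; lra].
Qed.

Lemma increasing_d2_term : increasing_on_unit_interval (fun t => t^3 * (3+t) / d2 t^3).
Proof.
  apply (increasing_of_derive _
    (fun t => t^2 * ((9 + 4*t) * d2 t^2 - 3*t*(3+t)*(1 + 3*t)) / d2 t^5));
    intros t Ht; pose proof (d2_pos t).
  - unfold d2; auto_derive; fold (d2 t); change (sqrt (3 + 2*t + 3*(t*(t*1)))) with (d2 t).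
    + repeat split; [nra | apply (pow_nonzero _ 3); lra].
    + field; apply Rgt_not_eq; lra.
  - apply Rdiv_lt_0_compat; [|apply pow_lt; lra].
    replace (d2 t^2) with (d2 t * d2 t) by ring. rewrite d2_sq. nra.
Qed.

Lemma increasing_d1_term : increasing_on_unit_interval (fun t => t^3 * (3-t) / d1 t^3).
Proof.
  apply (increasing_of_derive _
    (fun t => t^2 * ((9 - 4*t) * d1 t^2 - 3*t*(3-t)*(3*t - 1)) / d1 t^5));
    intros t Ht; pose proof (d1_pos t).
  - unfold d1; auto_derive; fold (d1 t); change (sqrt (3 + - (2*t) + 3*(t*(t*1)))) with (d1 t).
    + repeat split; [nra | apply (pow_nonzero _ 3); lra].
    + field; apply Rgt_not_eq; lra.
  - apply Rdiv_lt_0_compat; [|apply pow_lt; lra].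
    replace (d1 t^2) with (d1 t * d1 t) by ring. rewrite d1_sq. nra.
Qed.

Lemma G_increasing : increasing_on_unit_interval G.
Proof.
  intros x y Hx Hxy Hy. pose proof K_bounds. unfold G.
  pose proof (increasing_cube_over_sq_1pt x y Hx Hxy Hy).
  pose proof (increasing_cube_over_sq_1mt x y Hx Hxy Hy).
  pose proof (increasing_d2_term x y Hx Hxy Hy).
  pose proof (increasing_d1_term x y Hx Hxy Hy).
  simpl in *. nra.
Qed.

Lemma G_half_lt : G (1/2) < 2*a.
Proof.
  pose proof K_bounds; pose proof a_bounds.
  assert (/ d2 (1/2)^3 <= 1/8).
  { apply (inv_cube_le_of_sq _ 4); [apply d2_pos | rewrite d2_sq | |]; lra. }
  assert (/ d1 (1/2)^3 <= 0.22).
  { apply (inv_cube_le_of_sq _ 2.75); [apply d1_pos | rewrite d1_sq | |]; lra. }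
  unfold G, Rdiv. lra.
Qed.

Lemma G_three_quarters_gt : 2*a < G (3/4).
Proof.
  pose proof K_bounds; pose proof a_bounds.
  assert (0 < / d2 (3/4)^3) by (apply Rinv_0_lt_compat, pow_lt, d2_pos).
  assert (0 < / d1 (3/4)^3) by (apply Rinv_0_lt_compat, pow_lt, d1_pos).
  unfold G, Rdiv. lra.
Qed.

Theorem theorem11 :
  exists delta : R, 0 < delta < 1 /\
    forall t mu1 mu2 : R, mu1 <> 0 -> mu2 <> 0 ->
      ((0 < t < delta ->
          central_config 16 (nested_cubes t) (nested_masses mu1 mu2) ->
          (0 < mu1 /\ 0 < mu2) \/ (mu1 < 0 /\ mu2 < 0)) /\
       (delta < t < 1 ->
          central_config 16 (nested_cubes t) (nested_masses mu1 mu2) ->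
          (0 < mu1 /\ mu2 < 0) \/ (mu1 < 0 /\ 0 < mu2))).
Proof.
  destruct (increasing_crossing G (2*a) (1/2) (3/4) G_increasing
              ltac:(lra) ltac:(lra) G_half_lt G_three_quarters_gt)
    as [delta [Hdelta [Hbelow Habove]]].
  exists delta. split; [exact Hdelta|].
  intros t mu1 mu2 Hmu1 _. split; intros Ht Hcc;
    pose proof (central_nested_cubes_balance t mu1 mu2 ltac:(lra) Hcc) as Hbal;
    assert (Hp : 0 < t^2 * P t)
      by (apply Rmult_lt_0_compat; [apply pow_lt | apply P_pos]; lra).
  - apply (same_sign_of_balance _ _ _ (2*a - G t) Hmu1 Hp); [|exact Hbal].
    pose proof (Hbelow t Ht). lra.
  - apply (opposite_sign_of_balance _ _ _ (2*a - G t) Hmu1 Hp); [|exact Hbal].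
    pose proof (Habove t Ht). lra.
Qed.
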